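(* Let $S\in Sp(4n,\mathbb{R})$ be such that \begin{equation*} S\begin{pmatrix} \varGamma & 0 \\ 0 & \varGamma \end{pmatrix}S^{T}=\begin{pmatrix} \cdot & 0 \\ 0 & * \end{pmatrix} \quad \text{for all covariance matrices}\quad\varGamma\in\mathbb{R}^{2n\times 2n}, \end{equation*} where $*,\cdot$ denote arbitrary covariance matrices in $\mathbb{R}^{2n\times 2n}$ (i.e. the output is block diagonal with $2n\times 2n$ blocks). Then \begin{equation*} \begin{split} S&= \begin{pmatrix} X & 0 \\ 0 & Y \end{pmatrix}\frac{1}{\sqrt{1+\alpha^{2}}} \begin{pmatrix} \mathbb{1}_{2n} & \alpha\mathbb{1}_{2n}\\ -\alpha\mathbb{1}_{2n} & \mathbb{1}_{2n} \end{pmatrix} \quad\text{or}\quad S= \begin{pmatrix} 0 & X \\ Y & 0 \end{pmatrix}\frac{1}{\sqrt{1+\gamma^{2}}} \begin{pmatrix} \mathbb{1}_{2n} & -\gamma\mathbb{1}_{2n}\\ \gamma\mathbb{1}_{2n} & \mathbb{1}_{2n} \end{pmatrix}, \end{split} \end{equation*} where $X,Y\in Sp(2n,\mathbb{R})$, $\alpha,\gamma\in\mathbb{R}\cup\{\pm\infty\}$, and $\mathbb{1}_{2n}$ is the $2n\times 2n$ identity matrix.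
   Context: Setting: $n$-mode (and $2n$-mode) bosonic continuous-variable systems with canonical operators $R=(Q_1,P_1,\ldots,Q_n,P_n)$ satisfying $[R_k,R_l]=i\sigma_{kl}$, where $\sigma=\bigoplus_{i=1}^{n}\begin{pmatrix}0&1\\-1&0\end{pmatrix}$. $Sp(2m,\mathbb{R})$ denotes the group of real $2m\times 2m$ matrices $S$ with $S\sigma S^{T}=\sigma$ (with $\sigma$ the symplectic form of the appropriate size). A covariance matrix (CM) of an $n$-mode state is a real symmetric $2n\times 2n$ matrix $\varGamma$ with entries $\varGamma_{kl}=\mathrm{Tr}[\rho\{R_k-d_k,R_l-d_l\}]$, and genuine quantum CMs satisfy $\varGamma+i\sigma\geq 0$. A symplectic $S$ acts on a CM by $\varGamma\mapsto S\varGamma S^T$. *)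

From HB Require Import structures.
From mathcomp Require Import all_boot all_order all_algebra.
From mathcomp Require Import reals constructive_ereal.
From mathcomp.real_closed Require Import complex.
Set Implicit Arguments. Unset Strict Implicit. Unset Printing Implicit Defensive.
Import Order.TTheory GRing.Theory Num.Theory.
Local Open Scope ring_scope.

(* Symplectic form on m modes (phase space R^(2m)), ordering (Q1,P1,...,Qm,Pm):
   sigma = (+)_{i=1}^m [[0,1],[-1,0]], i.e. entry (2k,2k+1) = 1,
   entry (2k+1,2k) = -1 (0-based), all others 0. *)
Definition sympl_form {R : pzRingType} (m : nat) : 'M[R]_(m.*2) :=
  \matrix_(i < m.*2, j < m.*2)
    if ~~ odd i && (j == i.+1 :> nat) then 1
    else if odd i && (j.+1 == i :> nat) then -1 else 0.

Definition symplectic {R : pzRingType} (m : nat) (S : 'M[R]_(m.*2)) : Prop :=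
  S *m sympl_form m *m S^T = sympl_form m.

Definition sympl_form2 {R : pzRingType} (n : nat) : 'M[R]_(n.*2 + n.*2) :=
  block_mx (sympl_form n) 0 0 (sympl_form n).

Definition symplectic2 {R : pzRingType} (n : nat) (S : 'M[R]_(n.*2 + n.*2)) : Prop :=
  S *m sympl_form2 n *m S^T = sympl_form2 n.

(* Positive semidefinite complex (Hermitian) matrix: v^* M v >= 0 for all v
   (in a numClosedField, 0 <= z means z is real and nonnegative). *)
Definition psd_c {R : rcfType} (m : nat) (M : 'M[R[i]]_m) : Prop :=
  forall v : 'cV[R[i]]_m, 0 <= ((map_mx (@conjc R) v)^T *m M *m v) 0 0.

Definition cov_mx {R : rcfType} (n : nat) (G : 'M[R]_(n.*2)) : Prop :=
  G^T = G /\
  psd_c (map_mx (fun x : R => (x%:C)%C) G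
         + ('i)%C *: map_mx (fun x : R => (x%:C)%C) (sympl_form n)).

(* The matrix  1/sqrt(1+a^2) [[1, a 1],[-a 1, 1]]  (blocks of size 2n) for
   a in R u {+oo,-oo}; for a = +oo / -oo it is the limit
   [[0, 1],[-1, 0]] / [[0, -1],[1, 0]]. *)
Definition mix_mx {R : rcfType} (n : nat) (a : \bar R) : 'M[R]_(n.*2 + n.*2) :=
  match a with
  | EFin a => (Num.sqrt (1 + a ^+ 2))^-1 *: block_mx 1 (a%:M) (- a%:M) 1
  | +oo%E => block_mx 0 1 (-1) 0
  | -oo%E => block_mx 0 (-1) 1 0
  end.

Definition mix'_mx {R : rcfType} (n : nat) (g : \bar R) : 'M[R]_(n.*2 + n.*2) :=
  match g with
  | EFin g => (Num.sqrt (1 + g ^+ 2))^-1 *: block_mx 1 (- g%:M) (g%:M) 1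
  | +oo%E => block_mx 0 (-1) 1 0
  | -oo%E => block_mx 0 1 (-1) 0
  end.

(* Write S = [[A, B], [C, D]] with 2n x 2n blocks.  Since 1 and 1 + y y^T are
   covariance matrices, the off-diagonal block A G C^T + B G D^T of
   S (G (+) G) S^T vanishes at G = y y^T, i.e. (A y)(C y)^T + (B y)(D y)^T = 0 for
   every y, while symplecticity of S makes the rows of [A B] and of [C D]
   linearly independent.  Pick x and indices with r = ((A x)_i, (B x)_i) and
   s = ((C x)_k, (D x)_k) both nonzero: then r . s = 0, and the two identities
   force s1 A + s2 B = 0 and r1 C + r2 D = 0.  With u = r / |r| this reads
   A = u1 N, B = u2 N, C = - u2 K, D = u1 K, where N and K are symplectic because
   A, B and C, D come from S; this is the first normal form with alpha = u2 / u1
   (alpha = +-oo when u1 = 0). *)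

From HB Require Import structures.
From mathcomp Require Import all_boot all_order all_algebra.
From mathcomp Require Import reals constructive_ereal.
From mathcomp.real_closed Require Import complex.
From mathcomp Require Import ring.
Set Implicit Arguments. Unset Strict Implicit. Unset Printing Implicit Defensive.
Import Order.TTheory GRing.Theory Num.Theory.
Local Open Scope ring_scope.

Section SymplecticForm.
Variable R : pzRingType.

Definition sympl_partner (i : nat) : nat := if odd i then i.-1 else i.+1.
Definition sympl_sign (i : nat) : R := if odd i then -1 else 1.

Lemma sympl_partnerK : involutive sympl_partner.
Proof. by case=> [|i] //; rewrite /sympl_partner /=; case oi: (odd i); rewrite /= ?oi. Qed.

Lemma sympl_sign_partner i : sympl_sign (sympl_partner i) = - sympl_sign i.
Proof.
case: i => [|i] //; rewrite /sympl_sign /sympl_partner /=.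
by case oi: (odd i); rewrite /= ?oi ?opprK.
Qed.

Lemma sympl_partner_lt n (i : 'I_n.*2) : (sympl_partner i < n.*2)%N.
Proof.
rewrite /sympl_partner; case: ifP => [_|ev]; first exact: leq_ltn_trans (leq_pred _) _.
have := ltn_ord i; rewrite leq_eqVlt => /orP[/eqP iS|//].
by move: ev; rewrite -[odd i]negbK -oddS iS odd_double.
Qed.

Lemma sympl_formE n (i j : 'I_n.*2) :
  sympl_form n i j = if j == sympl_partner i :> nat then sympl_sign i else 0 :> R.
Proof.
rewrite mxE /sympl_partner /sympl_sign; case: (nat_of_ord i) => [|k] /=; first by case: odd.
by rewrite [j.+1 == _]eqSS; case: odd.
Qed.

Lemma trmx_sympl_form n : (sympl_form n)^T = - sympl_form n :> 'M[R]_(n.*2).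
Proof.
apply/matrixP => i j; rewrite [LHS]mxE [RHS]mxE !sympl_formE.
have -> : (i == sympl_partner j :> nat) = (j == sympl_partner i :> nat).
  by apply/eqP/eqP => ->; rewrite sympl_partnerK.
by case: eqP => [->|]; rewrite ?sympl_partnerK ?sympl_sign_partner ?oppr0.
Qed.

Lemma mulmx_sympl_form n : sympl_form n *m sympl_form n = - 1%:M :> 'M[R]_(n.*2).
Proof.
apply/matrixP => i j; rewrite !mxE (bigD1 (Ordinal (sympl_partner_lt i))) //= big1; last first.
  move=> k /eqP ki; rewrite sympl_formE; case: eqP => [ik|]; last by rewrite mul0r.
  by case: ki; apply: val_inj.
rewrite !sympl_formE /= eqxx sympl_partnerK addr0 sympl_sign_partner.
case: (eqVneq i j) => [->|ij]; last first.
  by rewrite ifN ?mulr0 ?oppr0 //; apply: contra_neq ij => /val_inj ->.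
by rewrite eqxx mulrN /sympl_sign; case: odd; rewrite ?mulN1r ?opprK ?mulr1.
Qed.

Lemma sympl_sum_row_free n (A B : 'M[R]_(n.*2)) :
  A *m sympl_form n *m A^T + B *m sympl_form n *m B^T = sympl_form n ->
  forall p : 'rV_(n.*2), p *m A = 0 -> p *m B = 0 -> p = 0.
Proof.
move=> AB_sympl p pA0 pB0.
have : p *m sympl_form n *m sympl_form n = 0.
  by rewrite -{1}AB_sympl mulmxDr !mulmxA pA0 pB0 !mul0mx addr0 mul0mx.
by rewrite -mulmxA mulmx_sympl_form mulmxN mulmx1 => /eqP; rewrite oppr_eq0 => /eqP.
Qed.

Lemma symplecticN n (X : 'M[R]_(n.*2)) : symplectic X -> symplectic (- X).
Proof. by rewrite /symplectic linearN /= mulNmx mulmxN mulNmx opprK. Qed.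

Lemma symplectic2_block n (A B C D : 'M[R]_(n.*2)) :
  symplectic2 (block_mx A B C D) ->
  A *m sympl_form n *m A^T + B *m sympl_form n *m B^T = sympl_form n /\
  C *m sympl_form n *m C^T + D *m sympl_form n *m D^T = sympl_form n.
Proof.
rewrite /symplectic2 /sympl_form2 tr_block_mx !mulmx_block !mulmx0 !addr0 !add0r.
by case/eq_block_mx => AB_sympl _ _ CD_sympl.
Qed.

End SymplecticForm.

Lemma sympl_congrZ (R : comPzRingType) n c (X : 'M[R]_(n.*2)) :
  (c *: X) *m sympl_form n *m (c *: X)^T = c ^+ 2 *: (X *m sympl_form n *m X^T).
Proof. by rewrite linearZ /= -!scalemxAl -scalemxAr scalerA expr2. Qed.

Section CovarianceMatrix.
Variable R : rcfType.
Local Notation conjm := (map_mx (@conjc R)).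
Local Notation complexm := (map_mx (fun x : R => x%:C%C)).

Lemma psd_c_gram p m (K : 'M[R[i]]_(p, m)) : psd_c (conjm K^T *m K).
Proof.
move=> v; rewrite map_trmx mulmxA -map_mxM -trmx_mul -mulmxA mxE.
by apply: sumr_ge0 => k _; rewrite !mxE mulrC mulcJ_ge0.
Qed.

Lemma psd_cD m (M N : 'M[R[i]]_m) : psd_c M -> psd_c N -> psd_c (M + N).
Proof. by move=> psdM psdN v; rewrite mulmxDr mulmxDl mxE addr_ge0. Qed.

Lemma psd_cZ m c (M : 'M[R[i]]_m) : 0 <= c -> psd_c M -> psd_c (c *: M).
Proof. by move=> c_ge0 psdM v; rewrite -scalemxAr -scalemxAl mxE mulr_ge0. Qed.

Lemma conjm_complexm p q (M : 'M[R]_(p, q)) : conjm (complexm M) = complexm M.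
Proof. by apply/matrixP => i j; rewrite !mxE conjc_real. Qed.

Lemma cov_mx_1_outer n (x : 'cV[R]_(n.*2)) : cov_mx (1%:M + x *m x^T).
Proof.
split; first by rewrite linearD /= trmx1 trmx_mul trmxK.
pose K := 1%:M + 'i%C *: complexm (sympl_form n).
have K_herm : conjm K^T = K.
  rewrite linearD linearZ /= map_mxD map_mxZ map_trmx trmx1 map_mx1 conjm_complexm.
  rewrite trmx_sympl_form map_mxN scalerN -scaleNr.
  by congr (_ + _ *: _); apply/eqP; rewrite eq_complex /= oppr0 opprK !eqxx.
have K_sqr : K *m K = 2%:R *: K.
  rewrite mulmxDl !mulmxDr !mul1mx !mulmx1 -!scalemxAl -!scalemxAr scalerA -map_mxM.
  rewrite mulmx_sympl_form map_mxN map_mx1 -expr2 sqr_i scaleN1r opprK.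
  by rewrite scaler_nat mulr2n [X in _ + X = _]addrC.
have -> : complexm (1%:M + x *m x^T) + 'i%C *: complexm (sympl_form n)
    = 2%:R^-1 *: (conjm K^T *m K) + conjm (complexm x^T)^T *m complexm x^T.
  rewrite K_herm K_sqr scalerA mulVf ?pnatr_eq0 // scale1r map_trmx trmxK conjm_complexm.
  by rewrite map_mxD map_mx1 map_mxM addrAC.
apply: psd_cD; last exact: psd_c_gram.
by apply: psd_cZ; [rewrite invr_ge0 ler0n | exact: psd_c_gram].
Qed.

End CovarianceMatrix.

Lemma mx_eq0_of_mulmx_cV (R : pzRingType) p m (M : 'M[R]_(p, m)) :
  (forall y : 'cV_m, M *m y = 0) -> M = 0.
Proof.
move=> My0; apply/matrixP => i j.
by have /matrixP/(_ i 0) := My0 (delta_mx j 0); rewrite -colE !mxE.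
Qed.

Lemma mulmx_neq0 (R : pzRingType) p m (M : 'M[R]_(p, m)) :
  M != 0 -> exists y : 'cV_m, M *m y != 0.
Proof.
move=> M_neq0; have [j Mj_neq0|Mj0] := pickP [pred j : 'I_m | M *m delta_mx j (0 : 'I_1) != 0].
  by exists (delta_mx j 0).
case/eqP: M_neq0; apply/matrixP => i j.
by move/negbFE/eqP/matrixP/(_ i 0): (Mj0 j); rewrite -colE !mxE.
Qed.

Lemma mulmx_neq0_common (R : pzRingType) p q m (M : 'M[R]_(p, m)) (N : 'M[R]_(q, m)) :
  M != 0 -> N != 0 -> exists y : 'cV_m, (M *m y != 0) && (N *m y != 0).
Proof.
move=> /mulmx_neq0[y My] /mulmx_neq0[z Nz].
have [Ny|/negbNE/eqP Ny] := boolP (N *m y != 0); first by exists y; rewrite My Ny.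
have [Mz|/negbNE/eqP Mz] := boolP (M *m z != 0); first by exists z; rewrite Mz Nz.
by exists (y + z); rewrite !mulmxDr Ny Mz addr0 add0r My Nz.
Qed.

Lemma linear_form_product_eq0 (R : idomainType) p m (f : 'rV[R]_m) (M : 'M[R]_(p, m)) :
  f != 0 -> (forall y : 'cV_m, f *m y *m (M *m y)^T = 0) -> M = 0.
Proof.
move=> f_neq0 fM0; apply/eqP; apply: contraT => M_neq0.
have [y /andP[fy My]] := mulmx_neq0_common f_neq0 M_neq0.
move/eqP: (fM0 y); rewrite [f *m y]mx11_scalar mul_scalar_mx scalemx_eq0 trmx_eq0.
rewrite (negbTE My) orbF => /eqP fy0.
by move: fy; rewrite [f *m y]mx11_scalar fy0 raddf0 eqxx.
Qed.

Lemma orthogonal_rV_exists (F : fieldType) m (u : 'cV[F]_m) :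
  (1 < m)%N -> exists2 p : 'rV_m, p != 0 & p *m u = 0.
Proof.
move=> m_gt1; exists (nz_row (kermx u)); last exact/sub_kermxP/nz_row_sub.
rewrite nz_row_eq0 -mxrank_eq0 mxrank_ker -lt0n subn_gt0.
exact: leq_ltn_trans (rank_leq_col u) m_gt1.
Qed.

Lemma free_pair_col_mx_neq0 (R : nzRingType) m p (A B : 'M[R]_(m, p)) : (0 < m)%N ->
  (forall q : 'rV_m, q *m A = 0 -> q *m B = 0 -> q = 0) -> col_mx A B != 0.
Proof.
case: m A B => // m A B _ AB_free; rewrite col_mx_eq0.
apply: contraTN isT => /andP[/eqP A0 /eqP B0].
have /matrixP/(_ 0 0) : const_mx 1 = 0 :> 'rV[R]_m.+1.
  by apply: AB_free; rewrite ?A0 ?B0 mulmx0.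
by rewrite !mxE => /eqP; rewrite oner_eq0.
Qed.

Lemma col_mx_entry_neq0 (R : zmodType) m (u v : 'cV[R]_m) :
  col_mx u v != 0 -> exists i, (u i 0 != 0) || (v i 0 != 0).
Proof.
move=> uv_neq0.
have [i|uv0] := pickP [pred i : 'I_m | (u i 0 != 0) || (v i 0 != 0)]; first by exists i.
case/eqP: uv_neq0; rewrite -col_mx0; congr col_mx; apply/matrixP => i j; rewrite (ord1 j) mxE;
  by have /norP[/negbNE/eqP ? /negbNE/eqP ?] := uv0 i.
Qed.

Lemma outer_mul_delta (R : comPzRingType) p q (u : 'cV[R]_p) (w : 'cV[R]_q) k :
  u *m w^T *m delta_mx k 0 = w k 0 *: u.
Proof.
rewrite -mulmxA -trmx_delta -trmx_mul -rowE [row k w]mx11_scalar.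
by rewrite tr_scalar_mx mul_mx_scalar mxE.
Qed.

Lemma outerE (R : pzRingType) p q (u : 'cV[R]_p) (w : 'cV[R]_q) i k :
  (u *m w^T) i k = u i 0 * w k 0.
Proof. by rewrite mxE big_ord1 mxE. Qed.

Lemma orthogonal_rV_exists2 (F : fieldType) m (u v : 'cV[F]_m) (s1 s2 : F) :
  (1 < m)%N -> (s1 != 0) || (s2 != 0) -> s1 *: u + s2 *: v = 0 ->
  exists2 p : 'rV_m, p != 0 & p *m u = 0 /\ p *m v = 0.
Proof.
move=> m_gt1; wlog s1_neq0 : s1 s2 u v / s1 != 0.
  move=> hwlog /orP[s1_neq0|s2_neq0] uv0; first by apply: (hwlog s1 s2); rewrite ?s1_neq0.
  rewrite addrC in uv0; have [|p p_neq0 [pv0 pu0]] := hwlog _ _ _ _ s2_neq0 _ uv0.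
    by rewrite s2_neq0.
  by exists p.
move=> _ uv0; have [p p_neq0 pv0] := orthogonal_rV_exists v m_gt1.
exists p => //; split=> //; apply/eqP.
have := congr1 (mulmx p) uv0; rewrite mulmxDr -!scalemxAr pv0 scaler0 addr0 mulmx0 => /eqP.
by rewrite scalemx_eq0 (negbTE s1_neq0).
Qed.

Lemma orthogonal_pair_parallel (F : fieldType) (V : lmodType F) (r1 r2 s1 s2 : F) (a b : V) :
  (s1 != 0) || (s2 != 0) -> r1 * s1 + r2 * s2 = 0 -> s1 *: a + s2 *: b = 0 ->
  r1 *: b = r2 *: a.
Proof.
move=> s_neq0 rs0 ab0; apply/eqP; rewrite -subr_eq0; apply/eqP.
have s1_kills :
    s1 *: (r1 *: b - r2 *: a) = (r1 * s1 + r2 * s2) *: b - r2 *: (s1 *: a + s2 *: b).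
  rewrite scalerBr scalerDl scalerDr !scalerA opprD addrACA subrr addr0.
  by rewrite mulrC [s1 * r2]mulrC.
have s2_kills :
    s2 *: (r1 *: b - r2 *: a) = r1 *: (s1 *: a + s2 *: b) - (r1 * s1 + r2 * s2) *: a.
  rewrite scalerBr scalerDl scalerDr !scalerA opprD addrACA subrr add0r.
  by rewrite mulrC [s2 * r2]mulrC.
case/orP: s_neq0 => /negbTE s_neq0; [move: s1_kills | move: s2_kills];
  by rewrite rs0 ab0 scale0r scaler0 subrr => /eqP; rewrite scaler_eq0 s_neq0 => /eqP.
Qed.

Lemma parallel_pair_decomp (R : comPzRingType) (V : lmodType R) (r1 r2 : R) (a b : V) :
  r1 *: b = r2 *: a ->
  (r1 ^+ 2 + r2 ^+ 2) *: a = r1 *: (r1 *: a + r2 *: b) /\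
  (r1 ^+ 2 + r2 ^+ 2) *: b = r2 *: (r1 *: a + r2 *: b).
Proof.
move=> rb_ra; rewrite !scalerDr !scalerA -!expr2 !scalerDl; split; congr (_ + _).
  by rewrite [r1 * r2]mulrC -[RHS]scalerA rb_ra scalerA -expr2.
by rewrite [r2 * r1]mulrC -[RHS]scalerA -rb_ra scalerA -expr2.
Qed.

Lemma orthogonal_pair_decomp (F : fieldType) (V : lmodType F) (r1 r2 s1 s2 : F) (a b : V) :
  (s1 != 0) || (s2 != 0) -> r1 * s1 + r2 * s2 = 0 -> s1 *: a + s2 *: b = 0 ->
  (r1 ^+ 2 + r2 ^+ 2) *: a = r1 *: (r1 *: a + r2 *: b) /\
  (r1 ^+ 2 + r2 ^+ 2) *: b = r2 *: (r1 *: a + r2 *: b).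
Proof.
move=> s_neq0 rs0 ab0.
exact/parallel_pair_decomp/(orthogonal_pair_parallel s_neq0 rs0).
Qed.

Section OrthogonalPencils.
Variables (F : realFieldType) (m : nat) (A B C D : 'M[F]_m).
Hypothesis m_gt1 : (1 < m)%N.
Hypothesis AB_free : forall p : 'rV_m, p *m A = 0 -> p *m B = 0 -> p = 0.
Hypothesis outer_sum0 : forall y : 'cV_m, A *m y *m (C *m y)^T + B *m y *m (D *m y)^T = 0.

Let form (y z : 'cV_m) := A *m y *m (C *m z)^T + B *m y *m (D *m z)^T.

Let formDl y1 y2 z : form (y1 + y2) z = form y1 z + form y2 z.
Proof. by rewrite /form !mulmxDr !mulmxDl addrACA. Qed.

Let formDr y z1 z2 : form y (z1 + z2) = form y z1 + form y z2.
Proof. by rewrite /form !mulmxDr !linearD /= addrACA. Qed.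

Let form_polar y z : form y z + form z y = 0.
Proof.
have := outer_sum0 (y + z); rewrite -/(form _ _) formDl !formDr.
by rewrite [form y y]outer_sum0 [form z z]outer_sum0 add0r addr0.
Qed.

(* A nonzero p with p A x = p B x = 0 makes p A and p B multiples of one row
   f != 0, and p applied to outer_sum0 then gives (f y)((r1 C + r2 D) y)^T = 0. *)
Lemma orthogonal_comb_eq0 (x : 'cV_m) (k : 'I_m) (r1 r2 : F) :
  let s1 := (C *m x) k 0 in let s2 := (D *m x) k 0 in
  (s1 != 0) || (s2 != 0) -> (r1 != 0) || (r2 != 0) -> r1 * s1 + r2 * s2 = 0 ->
  r1 *: C + r2 *: D = 0.
Proof.
move=> s1 s2 s_neq0 r_neq0 rs0.
have Ax_Bx : s1 *: (A *m x) + s2 *: (B *m x) = 0.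
  have := congr1 (mulmx^~ (delta_mx k (0 : 'I_1))) (outer_sum0 x).
  by rewrite /= mulmxDl !outer_mul_delta mul0mx.
have [p p_neq0 [pAx pBx]] := orthogonal_rV_exists2 m_gt1 s_neq0 Ax_Bx.
have pA_pB : s1 *: (p *m A) + s2 *: (p *m B) = 0.
  apply: mx_eq0_of_mulmx_cV => y.
  rewrite mulmxDl -!scalemxAl -!mulmxA !scalemxAr -mulmxDr.
  have := congr1 (mulmx^~ (delta_mx k (0 : 'I_1))) (form_polar x y).
  rewrite /= !mulmxDl !outer_mul_delta mul0mx => /(congr1 (mulmx p)).
  by rewrite mulmx0 !mulmxDr -!scalemxAr pAx pBx !scaler0 !add0r.
have [rhoA rhoB] := orthogonal_pair_decomp s_neq0 rs0 pA_pB.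
set f := r1 *: (p *m A) + r2 *: (p *m B) in rhoA rhoB; clearbody f.
have rho_neq0 : r1 ^+ 2 + r2 ^+ 2 != 0.
  by rewrite paddr_eq0 ?sqr_ge0 // !sqrf_eq0 negb_and.
have f_neq0 : f != 0.
  apply: contra_neq p_neq0 => f0; apply: AB_free; apply/eqP; [move/eqP: rhoA | move/eqP: rhoB];
    by rewrite f0 scaler0 scalemx_eq0 (negbTE rho_neq0).
apply: (linear_form_product_eq0 f_neq0) => y.
have := congr1 (mulmx ((r1 ^+ 2 + r2 ^+ 2) *: p)) (outer_sum0 y).
rewrite mulmx0 mulmxDr !mulmxA -[_ *: p *m A]scalemxAl -[_ *: p *m B]scalemxAl rhoA rhoB => <-.
by rewrite mulmxDl -!scalemxAl linearD /= !linearZ /= mulmxDr -!scalemxAr.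
Qed.

End OrthogonalPencils.

Lemma orthogonal_annihilators (F : realFieldType) m (A B C D : 'M[F]_m) :
  (1 < m)%N ->
  (forall p : 'rV_m, p *m A = 0 -> p *m B = 0 -> p = 0) ->
  (forall q : 'rV_m, q *m C = 0 -> q *m D = 0 -> q = 0) ->
  (forall y : 'cV_m, A *m y *m (C *m y)^T + B *m y *m (D *m y)^T = 0) ->
  exists r1 r2 s1 s2 : F, [/\ (r1 != 0) || (r2 != 0), (s1 != 0) || (s2 != 0),
     r1 * s1 + r2 * s2 = 0, s1 *: A + s2 *: B = 0 & r1 *: C + r2 *: D = 0].
Proof.
move=> m_gt1 AB_free CD_free outer_sum0.
have m_gt0 := ltnW m_gt1.
have [x /andP[]] := mulmx_neq0_common (free_pair_col_mx_neq0 m_gt0 AB_free)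
  (free_pair_col_mx_neq0 m_gt0 CD_free).
rewrite !mul_col_mx => /col_mx_entry_neq0[i r_neq0] /col_mx_entry_neq0[k s_neq0].
have rs0 : (A *m x) i 0 * (C *m x) k 0 + (B *m x) i 0 * (D *m x) k 0 = 0.
  by have /matrixP/(_ i k) := outer_sum0 x; rewrite mxE !outerE => ->; rewrite mxE.
exists ((A *m x) i 0), ((B *m x) i 0), ((C *m x) k 0), ((D *m x) k 0); split => //.
  apply: (orthogonal_comb_eq0 m_gt1 CD_free _ r_neq0 s_neq0).
    move=> y; apply: trmx_inj.
    by rewrite trmx0 -[RHS](outer_sum0 y) linearD /= !trmx_mul !trmxK.
  by rewrite mulrC [_ * (B *m x) i 0]mulrC.
exact: orthogonal_comb_eq0 m_gt1 AB_free outer_sum0 _ _ _ _ s_neq0 r_neq0 rs0.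
Qed.

Lemma rotation_factorization (F : rcfType) m (A B C D : 'M[F]_m) :
  (1 < m)%N ->
  (forall p : 'rV_m, p *m A = 0 -> p *m B = 0 -> p = 0) ->
  (forall q : 'rV_m, q *m C = 0 -> q *m D = 0 -> q = 0) ->
  (forall y : 'cV_m, A *m y *m (C *m y)^T + B *m y *m (D *m y)^T = 0) ->
  exists (u1 u2 : F) (N K : 'M[F]_m),
    [/\ u1 ^+ 2 + u2 ^+ 2 = 1, A = u1 *: N, B = u2 *: N, C = - u2 *: K & D = u1 *: K].
Proof.
move=> m_gt1 AB_free CD_free outer_sum0.
have [r1 [r2 [s1 [s2 [r_neq0 s_neq0 rs0 sAB0 rCD0]]]]] :=
  orthogonal_annihilators m_gt1 AB_free CD_free outer_sum0.
have rho_gt0 : 0 < r1 ^+ 2 + r2 ^+ 2.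
  by rewrite lt_def paddr_eq0 ?sqr_ge0 // !sqrf_eq0 negb_and r_neq0 addr_ge0 ?sqr_ge0.
pose c := Num.sqrt (r1 ^+ 2 + r2 ^+ 2).
have c_neq0 : c != 0 by rewrite gt_eqF ?sqrtr_gt0.
pose u1 := r1 / c; pose u2 := r2 / c.
have u_unit : u1 ^+ 2 + u2 ^+ 2 = 1.
  by rewrite !expr_div_n -mulrDl sqr_sqrtr ?ltW // divff ?gt_eqF.
have u_neq0 : (u1 != 0) || (u2 != 0).
  apply: contra_eqT u_unit => /norP[/negbNE/eqP-> /negbNE/eqP->].
  by rewrite expr0n addr0 eq_sym oner_eq0.
have us0 : u1 * s1 + u2 * s2 = 0.
  by rewrite /u1 /u2 [r1 / c * _]mulrAC [r2 / c * _]mulrAC -mulrDl rs0 mul0r.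
have uCD0 : u1 *: C + u2 *: D = 0.
  by rewrite /u1 /u2 ![_ / c]mulrC -!scalerA -scalerDr rCD0 scaler0.
have [eA eB] := orthogonal_pair_decomp s_neq0 us0 sAB0.
have uu0 : - u2 * u1 + u1 * u2 = 0 by rewrite mulNr mulrC addNr.
have [eC eD] := orthogonal_pair_decomp u_neq0 uu0 uCD0.
rewrite u_unit !scale1r in eA eB; rewrite sqrrN addrC u_unit !scale1r in eC eD.
by exists u1, u2, (u1 *: A + u2 *: B), (- u2 *: C + u1 *: D); split.
Qed.

Lemma diag_mul_mix_mxE (R : rcfType) n (a : R) (X Y : 'M[R]_(n.*2)) :
  let c := (Num.sqrt (1 + a ^+ 2))^-1 in
  block_mx X 0 0 Y *m mix_mx n a%:E =
    block_mx (c *: X) ((c * a) *: X) (- (c * a) *: Y) (c *: Y).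
Proof.
rewrite /mix_mx -scalemxAr mulmx_block !mul0mx !addr0 !add0r !mulmx1 mulmxN !mul_mx_scalar.
by rewrite scale_block_mx !scalerA scalerN scalerA scaleNr.
Qed.

Lemma inv_sqrt_1_add_ratio (R : rcfType) (u1 u2 : R) : u1 != 0 -> u1 ^+ 2 + u2 ^+ 2 = 1 ->
  (Num.sqrt (1 + (u2 / u1) ^+ 2))^-1 = `|u1|.
Proof.
move=> u1_neq0 u_unit.
suff -> : 1 + (u2 / u1) ^+ 2 = `|u1|^-1 ^+ 2 by rewrite sqrtr_sqr normfV normr_id invrK.
by rewrite exprVn real_normK ?num_real // -[RHS]mul1r -[in RHS]u_unit; field.
Qed.

Lemma rotation_block_mix_mx (R : rcfType) n (u1 u2 : R) (N K : 'M[R]_(n.*2)) :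
  u1 ^+ 2 + u2 ^+ 2 = 1 -> symplectic N -> symplectic K ->
  exists (X Y : 'M[R]_(n.*2)) (a : \bar R), symplectic X /\ symplectic Y /\
    block_mx (u1 *: N) (u2 *: N) (- u2 *: K) (u1 *: K) = block_mx X 0 0 Y *m mix_mx n a.
Proof.
move=> u_unit N_sympl K_sympl.
have [u1_gt0|u1_lt0|u1_0] := ltrgt0P u1.
- exists N, K, (u2 / u1)%:E; split=> //; split=> //.
  rewrite diag_mul_mix_mxE inv_sqrt_1_add_ratio ?gtr0_norm ?gt_eqF //.
  by rewrite mulrC divfK ?gt_eqF.
- exists (- N), (- K), (u2 / u1)%:E; do 2?split; try exact: symplecticN.
  rewrite diag_mul_mix_mxE inv_sqrt_1_add_ratio ?ltr0_norm ?lt_eqF //.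
  by rewrite mulNr mulrC divfK ?lt_eqF // !scaleNr !scalerN !opprK.
- move: u_unit; rewrite u1_0 expr0n add0r => /eqP; rewrite sqrf_eq1 => /orP[]/eqP->.
  + exists N, K, +oo%E; do 2?split => //=.
    rewrite mulmx_block !mulmx0 !mul0mx !addr0 !add0r !mulmx1 mulmxN mulmx1.
    by rewrite !scale0r scale1r scaleN1r.
  + exists N, K, -oo%E; do 2?split => //=.
    rewrite mulmx_block !mulmx0 !mul0mx !addr0 !add0r !mulmx1 mulmxN mulmx1.
    by rewrite !scale0r scaleN1r opprK scale1r.
Qed.

Lemma block_congr_offdiag_eq0 (R : pzRingType) m (A B C D G A' B' : 'M[R]_m) :
  block_mx A B C D *m block_mx G 0 0 G *m (block_mx A B C D)^T = block_mx A' 0 0 B' ->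
  A *m G *m C^T + B *m G *m D^T = 0.
Proof.
rewrite tr_block_mx !mulmx_block !mulmx0 !addr0 !add0r.
by case/eq_block_mx.
Qed.

Theorem lemma2 (R : realType) (n : nat) (S : 'M[R]_(n.*2 + n.*2)) :
  symplectic2 S ->
  (forall G : 'M[R]_(n.*2), cov_mx G ->
     exists A B : 'M[R]_(n.*2),
       S *m block_mx G 0 0 G *m S^T = block_mx A 0 0 B) ->
  (exists (X Y : 'M[R]_(n.*2)) (a : \bar R),
      symplectic X /\ symplectic Y /\ S = block_mx X 0 0 Y *m mix_mx n a)
  \/
  (exists (X Y : 'M[R]_(n.*2)) (g : \bar R),
      symplectic X /\ symplectic Y /\ S = block_mx 0 X Y 0 *m mix'_mx n g).
Proof.
move=> S_sympl S_cov; left.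
case: n S S_sympl S_cov => [|n] S S_sympl S_cov.
  by exists 0, 0, 0%:E; do 2?split; apply/matrixP => -[].
rewrite -(submxK S) in S_sympl S_cov *.
move: (ulsubmx S) (ursubmx S) (dlsubmx S) (drsubmx S) S_sympl S_cov => A B C D.
move=> /symplectic2_block[AB_sympl CD_sympl] S_cov.
have offdiag0 G : cov_mx G -> A *m G *m C^T + B *m G *m D^T = 0.
  by case/S_cov => A' [B']; apply: block_congr_offdiag_eq0.
have outer_sum0 (y : 'cV_(n.+1.*2)) : A *m y *m (C *m y)^T + B *m y *m (D *m y)^T = 0.
  have := offdiag0 _ (cov_mx_1_outer y); rewrite !mulmxDr !mulmxDl !mulmx1 addrACA.
  have := offdiag0 _ (cov_mx_1_outer 0); rewrite mul0mx addr0 !mulmx1 => ->.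
  by rewrite add0r !trmx_mul !mulmxA.
have n_gt1 : (1 < n.+1.*2)%N by rewrite doubleS.
have [u1 [u2 [N [K [u_unit eA eB eC eD]]]]] := rotation_factorization n_gt1
  (sympl_sum_row_free AB_sympl) (sympl_sum_row_free CD_sympl) outer_sum0.
subst A B C D; apply: rotation_block_mix_mx => //.
  by move: AB_sympl; rewrite !sympl_congrZ -scalerDl u_unit scale1r.
by move: CD_sympl; rewrite !sympl_congrZ -scalerDl sqrrN addrC u_unit scale1r.
Qed.
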